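(* Let $m<M$ be real numbers and let $X$ be a random variable taking values in $[m,M]$, either discrete (taking finitely many values $x_1,\dots,x_n\in[m,M]$ with probabilities $p_1,\dots,p_n$) or continuous (with probability density $f$ on $[m,M]$). Let $\mu_1'$ be its mean and $\mu_2,\mu_3,\mu_4$ its second, third and fourth central moments, and assume $\mu_2\neq(\mu_1'-m)(M-\mu_1')$. Then $$\mu_4\le (\mu_1'-m)(M-\mu_1')\mu_2+(m+M-2\mu_1')\mu_3-\frac{\big(\mu_3-(m+M-2\mu_1')\mu_2\big)^2}{(\mu_1'-m)(M-\mu_1')-\mu_2}.$$
   Context: The mean is $\mu_1'=\sum_{i=1}^n p_i x_i$ (discrete case) or $\mu_1'=\int_m^M x f(x)\,dx$ (continuous case), where $\sum p_i=1$, resp. $\int_m^M f(x)\,dx=1$. The $r$-th central moment is $\mu_r=\sum_{i=1}^n p_i (x_i-\mu_1')^r$, resp. $\mu_r=\int_m^M (x-\mu_1')^r f(x)\,dx$. *)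

From mathcomp Require Import all_boot all_order all_algebra.
From mathcomp Require Import all_classical all_reals all_analysis.
Set Implicit Arguments. Unset Strict Implicit. Unset Printing Implicit Defensive.
Import Order.TTheory GRing.Theory Num.Theory.
Local Open Scope classical_set_scope.
Local Open Scope ring_scope.

Definition dmean (R : realType) (n : nat) (p x : 'I_n -> R) : R :=
  \sum_(i < n) p i * x i.

Definition dcmoment (R : realType) (n : nat) (p x : 'I_n -> R) (r : nat) : R :=
  \sum_(i < n) p i * (x i - dmean p x) ^+ r.

Definition cmean (R : realType) (m M : R) (f : R -> R) : R :=
  Rintegral lebesgue_measure `[m, M] (fun x => x * f x).

Definition ccmoment (R : realType) (m M : R) (f : R -> R) (r : nat) : R :=
  Rintegral lebesgue_measure `[m, M] (fun x => (x - cmean m M f) ^+ r * f x).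

Definition mu4_bound (R : realType) (m M mu mu2 mu3 : R) : R :=
  (mu - m) * (M - mu) * mu2 + (m + M - 2 * mu) * mu3
  - (mu3 - (m + M - 2 * mu) * mu2) ^+ 2 / ((mu - m) * (M - mu) - mu2).

From mathcomp Require Import all_boot all_order all_algebra.
From mathcomp Require Import all_classical all_reals all_analysis.
From mathcomp Require Import ring lra.
Set Implicit Arguments. Unset Strict Implicit. Unset Printing Implicit Defensive.
Import Order.TTheory GRing.Theory Num.Theory.
Local Open Scope classical_set_scope.
Local Open Scope ring_scope.

(** For every real c the weight (X - m)(M - X)(X - mu - c)^2 is nonnegative on
    [m, M], hence so is its expectation.  In terms of the central moments
    mu_0 = 1, mu_1 = 0, mu_2, mu_3, mu_4 this expectation is the quadratic
    (A - mu_2) c^2 - 2 (s mu_2 - mu_3) c + (A mu_2 + s mu_3 - mu_4) in c, where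
    A = (mu - m)(M - mu) and s = m + M - 2 mu; its value at the vertex
    c = (s mu_2 - mu_3) / (A - mu_2) is exactly the slack in the bound. *)

Lemma quadratic_ge0_vertex (R : realFieldType) (a b d : R) :
  a != 0 -> (forall c, 0 <= a * c ^+ 2 - 2 * b * c + d) -> b ^+ 2 / a <= d.
Proof.
move=> a_neq0 /(_ (b / a)).
have -> : a * (b / a) ^+ 2 - 2 * b * (b / a) + d = d - b ^+ 2 / a by field.
by rewrite subr_ge0.
Qed.

Definition weight_moment (R : realType) (m M mu c : R) (mom : nat -> R) : R :=
  let A := (mu - m) * (M - mu) in
  let s := m + M - 2 * mu in
  A * c ^+ 2 * mom 0%N + ((s * c ^+ 2 - 2 * c * A) * mom 1%N
  + ((A - c ^+ 2 - 2 * c * s) * mom 2%N + ((2 * c + s) * mom 3%N + -1 * mom 4%N))).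

Lemma weight_moment_pow (R : realType) (m M mu c y : R) :
  weight_moment m M mu c (fun j => (y - mu) ^+ j) = (y - m) * (M - y) * (y - mu - c) ^+ 2.
Proof. by rewrite /weight_moment; ring. Qed.

Lemma weight_moment_pow_ge0 (R : realType) (m M mu c y : R) :
  m <= y <= M -> 0 <= weight_moment m M mu c (fun j => (y - mu) ^+ j).
Proof.
move=> /andP[my yM]; rewrite weight_moment_pow.
by apply: mulr_ge0; [apply: mulr_ge0; lra | exact: sqr_ge0].
Qed.

Lemma mu4_le_bound (R : realType) (m M mu : R) (mom : nat -> R) :
  mom 0%N = 1 -> mom 1%N = 0 -> mom 2%N != (mu - m) * (M - mu) ->
  (forall c, 0 <= weight_moment m M mu c mom) ->
  mom 4%N <= mu4_bound m M mu (mom 2%N) (mom 3%N).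
Proof.
move=> mom0 mom1 mom2_neq weight_ge0; rewrite /mu4_bound.
set A := (mu - m) * (M - mu); set s := m + M - 2 * mu.
have A_neq : A - mom 2%N != 0 by rewrite subr_eq0 eq_sym.
have quadratic_ge0 c : 0 <= (A - mom 2%N) * c ^+ 2
    - 2 * (s * mom 2%N - mom 3%N) * c + (A * mom 2%N + s * mom 3%N - mom 4%N).
  by have := weight_ge0 c; rewrite /weight_moment -/A -/s mom0 mom1; congr (_ <= _); ring.
have := quadratic_ge0_vertex A_neq quadratic_ge0.
have -> : (mom 3%N - s * mom 2%N) ^+ 2 = (s * mom 2%N - mom 3%N) ^+ 2 by ring.
lra.
Qed.

Section Discrete.
Variables (R : realType) (n : nat) (p x : 'I_n -> R).
Hypothesis p_sum1 : \sum_(i < n) p i = 1.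

Lemma dcmoment0 : dcmoment p x 0 = 1.
Proof. by rewrite /dcmoment; under eq_bigr do rewrite expr0 mulr1. Qed.

Lemma dcmoment1 : dcmoment p x 1 = 0.
Proof.
rewrite /dcmoment; under eq_bigr do rewrite expr1 mulrBr.
by rewrite sumrB -mulr_suml p_sum1 mul1r subrr.
Qed.

Lemma weight_moment_dcmoment (m M c : R) :
  weight_moment m M (dmean p x) c (dcmoment p x) =
  \sum_(i < n) p i * weight_moment m M (dmean p x) c (fun j => (x i - dmean p x) ^+ j).
Proof.
rewrite /weight_moment /dcmoment !mulr_sumr -!big_split /=.
by apply: eq_bigr => i _; ring.
Qed.

End Discrete.

Section Continuous.
Variables (R : realType) (m M : R) (f : R -> R).
Hypothesis f_int : lebesgue_measure.-integrable `[m, M] (EFin \o f).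

Let mD : measurable (`[m, M] : set (measurableTypeR R)). Proof. exact: measurable_itv. Qed.

Lemma integrable_shifted_pow_mul (k : nat) (a : R) :
  lebesgue_measure.-integrable `[m, M] (EFin \o (fun y => (y - a) ^+ k * f y)).
Proof.
have pow_meas : measurable_fun `[m, M] (fun y : R => (y - a) ^+ k).
  apply: measurable_realfun.measurable_funX.
  by apply: measurable_realfun.measurable_funB => //; exact: measurable_cst.
have pow_bounded : [bounded (y - a) ^+ k | y in `[m, M]].
  exists ((`|m| + `|M| + `|a|) ^+ k); split; first exact: num_real.
  move=> B /ltW/(le_trans _) leB y; rewrite /= in_itv /= => /andP[my yM].
  apply: leB; rewrite normrX lerXn2r ?nnegrE ?normr_ge0 //.
  apply: le_trans (ler_normB y a) _; rewrite lerD2r ler_norml.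
  have := ler_norm M; have := normr_ge0 m; have := normr_ge0 M.
  have : - `|m| <= m by rewrite lerNl -normrN ler_norm.
  lra.
have := integrableMr mD pow_meas pow_bounded f_int.
by congr (integrable _ _ _); apply/funext.
Qed.

Lemma integrable_shifted_powZ (a b : R) (k : nat) :
  lebesgue_measure.-integrable `[m, M] (EFin \o (fun y => b * ((y - a) ^+ k * f y))).
Proof.
have := integrableZl mD b (integrable_shifted_pow_mul k a).
by congr (integrable _ _ _); apply/funext.
Qed.

Lemma integrable_shifted_powZD (a b : R) (k : nat) (h : R -> R) :
  lebesgue_measure.-integrable `[m, M] (EFin \o h) ->
  lebesgue_measure.-integrable `[m, M] (EFin \o (fun y => b * ((y - a) ^+ k * f y) + h y)).
Proof.
move=> h_int; have := integrableD mD (integrable_shifted_powZ a b k) h_int.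
by congr (integrable _ _ _); apply/funext.
Qed.

Lemma Rintegral_shifted_powZD (a b : R) (k : nat) (h : R -> R) :
  lebesgue_measure.-integrable `[m, M] (EFin \o h) ->
  Rintegral lebesgue_measure `[m, M] (fun y => b * ((y - a) ^+ k * f y) + h y) =
  b * Rintegral lebesgue_measure `[m, M] (fun y => (y - a) ^+ k * f y)
  + Rintegral lebesgue_measure `[m, M] h.
Proof.
move=> h_int; rewrite (RintegralD mD (integrable_shifted_powZ a b k) h_int).
by rewrite -(RintegralZl b mD (integrable_shifted_pow_mul k a)).
Qed.

Lemma weight_moment_ccmoment (c : R) :
  let mu := cmean m M f in
  weight_moment m M mu c (ccmoment m M f) =
  Rintegral lebesgue_measure `[m, M]
    (fun y => weight_moment m M mu c (fun j => (y - mu) ^+ j) * f y).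
Proof.
move=> mu; set A := (mu - m) * (M - mu); set s := m + M - 2 * mu.
have -> : Rintegral lebesgue_measure `[m, M]
    (fun y => weight_moment m M mu c (fun j => (y - mu) ^+ j) * f y) =
  Rintegral lebesgue_measure `[m, M] (fun y =>
    A * c ^+ 2 * ((y - mu) ^+ 0 * f y) + ((s * c ^+ 2 - 2 * c * A) * ((y - mu) ^+ 1 * f y)
    + ((A - c ^+ 2 - 2 * c * s) * ((y - mu) ^+ 2 * f y)
    + ((2 * c + s) * ((y - mu) ^+ 3 * f y) + -1 * ((y - mu) ^+ 4 * f y))))).
  by apply: eq_Rintegral => y _; rewrite /weight_moment -/A -/s; ring.
rewrite !Rintegral_shifted_powZD ?(RintegralZl _ mD (integrable_shifted_pow_mul _ _)) //.
all: by repeat first [exact: (integrable_shifted_powZ mu)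
                     | apply: (integrable_shifted_powZD mu)].
Qed.

Hypothesis f_total : Rintegral lebesgue_measure `[m, M] f = 1.

Lemma ccmoment0 : ccmoment m M f 0 = 1.
Proof. by rewrite /ccmoment; under eq_Rintegral do rewrite expr0 mul1r. Qed.

Lemma ccmoment1 : ccmoment m M f 1 = 0.
Proof.
rewrite /ccmoment; under eq_Rintegral do rewrite expr1 mulrBl.
have xf_int := integrable_shifted_pow_mul 1 0.
have {}xf_int : lebesgue_measure.-integrable `[m, M] (EFin \o (fun y => y * f y)).
  by move: xf_int; congr (integrable _ _ _); apply/funext => y /=; rewrite subr0 expr1.
have muf_int := integrableZl mD (cmean m M f) f_int.
by rewrite (RintegralB mD xf_int muf_int) (RintegralZl _ mD f_int) f_total mulr1 subrr.
Qed.

End Continuous.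

Theorem theorem2p2 (R : realType) (m M : R) (hmM : m < M) :
  (* discrete case *)
  (forall (n : nat) (x p : 'I_n -> R),
     (forall i, m <= x i <= M) ->
     (forall i, 0 <= p i) ->
     \sum_(i < n) p i = 1 ->
     let mu := dmean p x in
     dcmoment p x 2 != (mu - m) * (M - mu) ->
     dcmoment p x 4 <= mu4_bound m M mu (dcmoment p x 2) (dcmoment p x 3))
  /\
  (* continuous case *)
  (forall f : R -> R,
     measurable_fun `[m, M] f ->
     (forall y, y \in `[m, M] -> 0 <= f y) ->
     lebesgue_measure.-integrable `[m, M] (EFin \o f) ->
     Rintegral lebesgue_measure `[m, M] f = 1 ->
     let mu := cmean m M f in
     ccmoment m M f 2 != (mu - m) * (M - mu) ->
     ccmoment m M f 4 <= mu4_bound m M mu (ccmoment m M f 2) (ccmoment m M f 3)).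
Proof.
split.
  move=> n x p x_mM p_ge0 p_sum1 mu mom2_neq.
  apply: mu4_le_bound => //; [exact: dcmoment0 | exact: dcmoment1 |].
  move=> c; rewrite weight_moment_dcmoment; apply: sumr_ge0 => i _.
  by apply: mulr_ge0 => //; exact: weight_moment_pow_ge0.
move=> f _ f_ge0 f_int f_total mu mom2_neq.
apply: mu4_le_bound => //; [exact: ccmoment0 | exact: ccmoment1 |].
move=> c; rewrite weight_moment_ccmoment //; apply: Rintegral_ge0 => y y_mM.
apply: mulr_ge0; last exact: f_ge0.
by apply: weight_moment_pow_ge0; move: y_mM; rewrite /= in_itv.
Qed.
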